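(* Let $K$ be a field of characteristic zero and $m>1$. Then the ring $K(\!(\mathbf{t})\!)^\circ=\{q\in K(\!(\mathbf{t})\!):\operatorname{trop}(q)\le1\}$ is not Noetherian.
   Context: $\mathbf{t}=(t_1,\dots,t_m)$, $K(\!(\mathbf{t})\!)=\operatorname{Frac}K[\![\mathbf{t}]\!]$. $V\mathbb{B}[\mathbf{t}]$ is the semiring of subsets of $\mathbb{N}^m$ equal to the vertex set of their Newton polyhedron $\operatorname{conv}(\cdot)+\mathbb{R}^m_{\ge0}$, with $a\oplus b$ = vertices of the Newton polyhedron of $a\cup b$ and $a\odot b$ = vertices of that of $a+b$; $V\mathbb{B}(\mathbf{t})$ is its fraction semifield, ordered by $a/b\le c/d$ iff $a\odot d\oplus b\odot c=b\odot c$. $\operatorname{trop}(f)$ is the vertex set of the Newton polyhedron of $\operatorname{Supp}(f)$ for $f\in K[\![\mathbf{t}]\!]$, and $\operatorname{trop}(f/g)=\operatorname{trop}(f)/\operatorname{trop}(g)$. *)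

From Stdlib Require Import Rdefinitions.
From HB Require Import structures.
From mathcomp Require Import all_boot all_order all_algebra.
From mathcomp Require Import Rstruct.

Set Implicit Arguments.
Unset Strict Implicit.
Unset Printing Implicit Defensive.

Import Order.TTheory GRing.Theory Num.Theory.
Local Open Scope ring_scope.

Definition mon (m : nat) := {ffun 'I_m -> nat}.

(* Subtraction of exponents (used only when a <= c pointwise). *)
Definition mon_sub m (c a : mon m) : mon m := [ffun i => (c i - a i)%N].

Definition mon_bnd m (c : mon m) : nat := (\max_(i < m) c i).+1.
Definition mon_divs m (c : mon m) : seq (mon m) :=
  [seq a : mon m <- [seq ([ffun i => nat_of_ord (b i)] : mon m)
             | b : {ffun 'I_m -> 'I_(mon_bnd c)}]
   | [forall i, (a i <= c i)%N]].

Definition series (K : fieldType) (m : nat) := mon m -> K.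

Section Series.
Variables (K : fieldType) (m : nat).

Definition ser_add (f g : series K m) : series K m := fun c => f c + g c.
Definition ser_mul (f g : series K m) : series K m :=
  fun c => \sum_(a <- mon_divs c) f a * g (mon_sub c a).
Definition ser_zero : series K m := fun _ => 0.
Definition ser_one : series K m := fun c => if [forall i, c i == 0%N] then 1 else 0.
Definition ser_nonzero (f : series K m) : Prop := exists c, f c != 0.
Definition supp (f : series K m) : mon m -> Prop := fun c => f c != 0.

End Series.
Arguments ser_zero : clear implicits.
Arguments ser_one : clear implicits.

Definition emb m (v : mon m) : 'I_m -> R := fun i => (v i)%:R.

Definition in_newton m (S : mon m -> Prop) (x : 'I_m -> R) : Prop :=
  exists (n : nat) (lam : 'I_n -> R) (pts : 'I_n -> mon m),
    (forall k, S (pts k)) /\ (forall k, 0 <= lam k) /\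
    \sum_(k < n) lam k = 1 /\
    (forall i, \sum_(k < n) lam k * (pts k i)%:R <= x i).

Definition is_vertex m (S : mon m -> Prop) (x : 'I_m -> R) : Prop :=
  in_newton S x /\
  forall (y z : 'I_m -> R) (t : R), in_newton S y -> in_newton S z ->
    0 < t -> t < 1 -> (forall i, x i = t * y i + (1 - t) * z i) ->
    forall i, y i = z i.

(* The vertex set of the Newton polyhedron of S, as a subset of N^m
   (all vertices are points of S, hence lattice points). *)
Definition vert m (S : mon m -> Prop) : mon m -> Prop :=
  fun v => is_vertex S (emb v).

Definition seteq m (A B : mon m -> Prop) : Prop := forall v, A v <-> B v.

Definition vb_add m (a b : mon m -> Prop) : mon m -> Prop :=
  vert (fun v => a v \/ b v).
Definition vb_mul m (a b : mon m -> Prop) : mon m -> Prop :=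
  vert (fun v => exists x y, a x /\ b y /\ forall i, v i = (x i + y i)%N).
Definition vb_one (m : nat) : mon m -> Prop := fun v => forall i, v i = 0%N.
Arguments vb_one : clear implicits.

(* The order of the fraction semifield VB(t): a/b <= c/d iff
   a (.) d (+) b (.) c = b (.) c *)
Definition vb_le m (a b c d : mon m -> Prop) : Prop :=
  seteq (vb_add (vb_mul a d) (vb_mul b c)) (vb_mul b c).

Definition trop (K : fieldType) m (f : series K m) : mon m -> Prop := vert (supp f).

Section Frac.
Variables (K : fieldType) (m : nat).

Definition frac := (series K m * series K m)%type.

Definition frac_wf (q : frac) : Prop := ser_nonzero q.2.
Definition frac_eq (q r : frac) : Prop :=
  forall c, ser_mul q.1 r.2 c = ser_mul r.1 q.2 c.
Definition frac_add (q r : frac) : frac :=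
  (ser_add (ser_mul q.1 r.2) (ser_mul r.1 q.2), ser_mul q.2 r.2).
Definition frac_mul (q r : frac) : frac := (ser_mul q.1 r.1, ser_mul q.2 r.2).
Definition frac_zero : frac := (ser_zero K m, ser_one K m).

(* q belongs to K((t))^o = { q : trop(q) <= 1 },
   with trop(f/g) = trop(f)/trop(g) and 1 = {0}/{0}. *)
Definition in_circ (q : frac) : Prop :=
  frac_wf q /\ vb_le (trop q.1) (trop q.2) (vb_one m) (vb_one m).

Definition is_ideal (I : frac -> Prop) : Prop :=
  [/\ (forall q, I q -> in_circ q),
      (forall q r, I q -> frac_wf r -> frac_eq q r -> I r),
      I frac_zero,
      (forall q r, I q -> I r -> I (frac_add q r)) &
      (forall a q, in_circ a -> I q -> I (frac_mul a q))].

Definition finitely_generated (I : frac -> Prop) : Prop :=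
  exists (n : nat) (gens : 'I_n -> frac),
    (forall k, I (gens k)) /\
    forall q, I q -> exists coef : 'I_n -> frac,
      (forall k, in_circ (coef k)) /\
      frac_eq q (foldr frac_add frac_zero
                   [seq frac_mul (coef k) (gens k) | k <- enum 'I_n]).

Definition circ_noetherian : Prop :=
  forall I, is_ideal I -> finitely_generated I.

End Frac.

(* Order N^m lexicographically. The lex-least exponent [lm] of the support gives a
   valuation v(f/g) = lm f - lm g on K((t)), and a point of a Newton polyhedron
   lex-dominates the lex-least exponent, so v >= 0 on K((t))^o. Hence the elements
   of K((t))^o whose valuation has positive first coordinate form an ideal I. If
   g_1, ..., g_k generated I, every element of I would have valuation
   >=lex (1, -M, 0, ..., 0) for M exceeding the second coordinates of the
   denominator exponents lm of the g_i, but t_1 / (t_1 + t_2^(M+1)) lies in I and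
   has valuation (1, -M-1, 0, ..., 0).
   The delicate point is that membership in K((t))^o, i.e. supp f in NP(g), does not
   depend on the representative f/g: it is the cancellation NP(A) + C <= NP(B) + C
   => NP(A) <= NP(B) for the polytope C spanned by the minimal exponents of g,
   obtained by averaging against a stationary distribution of a stochastic matrix.
   Dickson's lemma provides these finitely many minimal exponents, and also shows
   that a Newton polyhedron is the Newton polyhedron of its vertices. *)

From Pilot Require Import Defs.
From Stdlib Require Import Classical FunctionalExtensionality ClassicalEpsilon.
From HB Require Import structures.
From mathcomp Require Import all_boot all_order all_algebra.
From mathcomp Require Import Rstruct lra zify.

Set Implicit Arguments.
Unset Strict Implicit.
Unset Printing Implicit Defensive.

Import Order.TTheory GRing.Theory Num.Theory.
Local Open Scope ring_scope.
Local Notation R := Rdefinitions.R.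

Section Lex.
Variable m : nat.

Definition vec := 'I_m -> R.
Definition vadd (x y : vec) : vec := fun i => x i + y i.
Definition vscale (a : R) (x : vec) : vec := fun i => a * x i.

Definition lexlt (x y : vec) := exists i : 'I_m,
  (forall j : 'I_m, (j < i)%N -> x j = y j) /\ x i < y i.
Definition lexle (x y : vec) := x = y \/ lexlt x y.

Implicit Types x y z u v : vec.

Lemma lexlt_trans x y z : lexlt x y -> lexlt y z -> lexlt x z.
Proof.
move=> [i [Hi Hxy]] [j [Hj Hyz]].
case: (ltngtP i j) => [ij|ji|/val_inj ij].
- exists i; split; last by rewrite -(Hj i ij).
  by move=> k ki; rewrite Hi // Hj //; apply: ltn_trans ki ij.
- exists j; split; last by rewrite (Hi j ji).
  by move=> k kj; rewrite Hi ?Hj //; apply: ltn_trans kj ji.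
- subst j; exists i; split; last exact: lt_trans Hxy Hyz.
  by move=> k ki; rewrite Hi ?Hj.
Qed.

Lemma lexlt_irr x : ~ lexlt x x.
Proof. by move=> [i [_ H]]; rewrite ltxx in H. Qed.

Lemma lexle_trans x y z : lexle x y -> lexle y z -> lexle x z.
Proof. case=> [->//|H1]; case=> [<-|H2]; right=> //; exact: lexlt_trans H1 H2. Qed.

Lemma lexle_anti x y : lexle x y -> lexle y x -> x = y.
Proof. by case=> [//|H1] [//|H2]; case: (lexlt_irr (lexlt_trans H1 H2)). Qed.

Lemma vaddC x y : vadd x y = vadd y x.
Proof. by apply: functional_extensionality => i; rewrite /vadd addrC. Qed.

Lemma vaddA x y z : vadd (vadd x y) z = vadd x (vadd y z).
Proof. by apply: functional_extensionality => i; rewrite /vadd addrA. Qed.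

Lemma lexlt_add x y u v : lexlt x y -> lexle u v -> lexlt (vadd x u) (vadd y v).
Proof.
move=> [i [Hi Hxy]]; case=> [<-|[j [Hj Huv]]].
  by exists i; split; [move=> k ki; rewrite /vadd Hi|rewrite /vadd ltrD2r].
case: (ltngtP i j) => [ij|ji|/val_inj ij].
- exists i; split; last by rewrite /vadd (Hj i ij) ltrD2r.
  by move=> k ki; rewrite /vadd Hi // Hj //; apply: ltn_trans ki ij.
- exists j; split; last by rewrite /vadd (Hi j ji) ltrD2l.
  by move=> k kj; rewrite /vadd Hi ?Hj //; apply: ltn_trans kj ji.
- subst j; exists i; split; last exact: ltrD.
  by move=> k ki; rewrite /vadd Hi ?Hj.
Qed.

Lemma lexle_add x y u v : lexle x y -> lexle u v -> lexle (vadd x u) (vadd y v).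
Proof.
case=> [<-|H1] H2; last by right; apply: lexlt_add.
case: H2 => [<-|H2]; first by left.
by right; rewrite vaddC [vadd x v]vaddC; apply: lexlt_add => //; left.
Qed.

Lemma lexle_add2r x y z : lexle (vadd x z) (vadd y z) -> lexle x y.
Proof.
case=> [E|[i [Hi lt]]]; [left|right].
  by apply: functional_extensionality => j; apply: (addIr (z j)); apply: (congr1 (@^~ j) E).
exists i; split; last by rewrite ltrD2r in lt.
by move=> j ji; apply: (addIr (z j)); apply: Hi.
Qed.

Lemma lexle_scale a x y : 0 <= a -> lexle x y -> lexle (vscale a x) (vscale a y).
Proof.
rewrite le_eqVlt => /orP[/eqP<-|a0].
  by left; apply: functional_extensionality => i; rewrite /vscale !mul0r.
case=> [->|[i [Hi Hxy]]]; first by left.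
by right; exists i; split; [move=> k ki; rewrite /vscale Hi|rewrite /vscale ltr_pM2l].
Qed.

Lemma first_diff x y : x <> y ->
  exists i : 'I_m, (forall j : 'I_m, (j < i)%N -> x j = y j) /\ x i != y i.
Proof.
move=> ne.
have ex : exists k, [exists i : 'I_m, (nat_of_ord i == k) && (x i != y i)].
  apply: NNPP => Hn; apply: ne; apply: functional_extensionality => i.
  apply/eqP; apply: contraT => H; case: Hn; exists (nat_of_ord i).
  by apply/existsP; exists i; rewrite eqxx H.
case: (ex_minnP ex) => k /existsP [i /andP [/eqP ik nxy]] kmin.
exists i; split=> // j ji; apply/eqP; apply: contraT => H.
have : (k <= j)%N by apply: kmin; apply/existsP; exists j; rewrite eqxx H.
by rewrite -ik leqNgt ji.
Qed.

Lemma lexle_total x y : lexle x y \/ lexle y x.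
Proof.
case: (classic (x = y)) => [->|/first_diff [i [Hi ne]]]; first by left; left.
case: (ltgtP (x i) (y i)) => [lt|gt|eq]; last by rewrite eq eqxx in ne.
- by left; right; exists i.
- by right; right; exists i; split=> // j ji; rewrite Hi.
Qed.

Lemma le_lexle x y : (forall i, x i <= y i) -> lexle x y.
Proof.
move=> le; case: (classic (x = y)) => [->|/first_diff [i [Hi ne]]]; first by left.
by right; exists i; split=> //; rewrite lt_neqAle ne le.
Qed.

Lemma emb_inj : injective (@emb m).
Proof.
move=> a b E; apply/ffunP => i.
by move/(congr1 (fun x : vec => x i))/eqP: E; rewrite /emb eqr_nat => /eqP.
Qed.

Lemma emb_le (a b : mon m) : (forall i, (a i <= b i)%N) -> forall i, emb a i <= emb b i.
Proof. by move=> H i; rewrite /emb ler_nat. Qed.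

End Lex.

Lemma lexle_ord0 n (x y : vec n.+1) : lexle x y -> x ord0 <= y ord0.
Proof.
case=> [->//|[i [Hi lt]]]; have [i0|ne] := eqVneq i ord0; first by rewrite -i0 ltW.
by rewrite Hi // lt0n; apply: contra ne => /eqP i0; apply/eqP/val_inj.
Qed.

Definition ord_one n : 'I_n.+2 := Ordinal (isT : (1 < n.+2)%N).

Lemma lexle_ord_one n (x y : vec n.+2) :
  lexle x y -> x ord0 = y ord0 -> x (ord_one n) <= y (ord_one n).
Proof.
case=> [->//|[i [Hi lt]] e0].
case: i Hi lt => [[|[|k]] ik] /= Hi lt.
- by move: lt; rewrite (_ : Ordinal ik = ord0) ?e0 ?ltxx //; apply: val_inj.
- by rewrite (_ : ord_one n = Ordinal ik) ?ltW //; apply: val_inj.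
- by rewrite Hi.
Qed.

Section Dickson.
Variable m : nat.
Implicit Types (S : mon m -> Prop) (P : seq (mon m)).

Definition mon_basis S P :=
  (forall p, p \in P -> S p) /\
  forall s, S s -> exists2 p, p \in P & forall i, (p i <= s i)%N.

Definition fixed_off (A : {set 'I_m}) S :=
  forall s s', S s -> S s' -> forall i, i \notin A -> s i = s' i.

Lemma mon_basis_bigcup (I : eqType) (L : seq I) (T : I -> mon m -> Prop) :
  (forall i, i \in L -> exists P, mon_basis (T i) P) ->
  exists P, mon_basis (fun s => exists2 i, i \in L & T i s) P.
Proof.
elim: L => [|i L IH] HL; first by exists [::]; split=> // s [].
have [P1 [P1T P1c]] := HL i (mem_head _ _).
have [P2 [P2T P2c]] : exists P, mon_basis (fun s => exists2 i, i \in L & T i s) P.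
  by apply: IH => j jL; apply: HL; rewrite inE jL orbT.
exists (P1 ++ P2); split.
  move=> p; rewrite mem_cat => /orP[/P1T Tp|/P2T [j jL Tp]].
    by exists i; rewrite ?mem_head.
  by exists j; rewrite ?inE ?jL ?orbT.
move=> s [j]; rewrite inE => /orP[/eqP-> /P1c [p pP le]|jL Tjs].
  by exists p; rewrite ?mem_cat ?pP.
have [p pP le] := P2c s (ex_intro2 _ _ j jL Tjs).
by exists p; rewrite ?mem_cat ?pP ?orbT.
Qed.

(* Every element of S not above s0 lies in one of the finitely many slices
   [s i = j] with i in A and j < s0 i, each of which has one free coordinate less. *)
Lemma dickson_step (A : {set 'I_m}) S :
  (forall i, i \in A -> forall S', fixed_off (A :\ i) S' -> exists P, mon_basis S' P) ->
  fixed_off A S -> exists P, mon_basis S P.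
Proof.
move=> IH HS; case: (classic (exists s, S s)) => [[s0 Ss0]|nS]; last first.
  by exists [::]; split=> // s Ss; case: nS; exists s.
pose L := [seq (i, j) | i <- enum A, j <- iota 0 (s0 i)].
have [P [PS Pc]] : exists P,
    mon_basis (fun s => exists2 ij, ij \in L & S s /\ s ij.1 = ij.2) P.
  apply: mon_basis_bigcup => ij /allpairsPdep [i [j [iA _ ->]]].
  apply: (IH i); first by rewrite mem_enum in iA.
  move=> s s' [Ss e] [Ss' e'] k; rewrite !inE negb_and negbK.
  by case: (eqVneq k i) => [->|_] /= Hk; [rewrite e e'|apply: HS].
exists (s0 :: P); split.
  by move=> p; rewrite inE => /orP[/eqP->//|/PS [ij _ []]].
move=> s Ss; case: (boolP [forall i, s0 i <= s i]%N) => [/forallP le|].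
  by exists s0; rewrite ?mem_head.
rewrite negb_forall => /existsP [i]; rewrite -ltnNge => lt.
have iA : i \in A.
  by apply: contraTT lt => niA; rewrite (HS s0 s Ss0 Ss i niA) ltnn.
have [p pP le] : exists2 p, p \in P & forall k, (p k <= s k)%N.
  apply: Pc; exists (i, s i) => //; apply/allpairsPdep; exists i, (s i).
  by rewrite mem_enum mem_iota add0n.
by exists p; rewrite ?inE ?pP ?orbT.
Qed.

Lemma dickson S : exists P, mon_basis S P.
Proof.
have fixed_basis n (A : {set 'I_m}) S' :
    (#|A| <= n)%N -> fixed_off A S' -> exists P, mon_basis S' P.
  elim: n A S' => [|n IH] A S' cA HS; apply: (dickson_step _ HS) => i iA S'' HS''.
    by move: cA; rewrite leqn0 cards_eq0 => /eqP A0; rewrite A0 inE in iA.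
  by apply: (IH (A :\ i)) => //; move: cA; rewrite (cardsD1 i) iA.
apply: (fixed_basis m [set: 'I_m]); first by rewrite cardsT card_ord.
by move=> s s' _ _ i; rewrite inE.
Qed.

Lemma lexmin_seq P p0 : p0 \in P ->
  exists2 p, p \in P & forall q, q \in P -> lexle (emb p) (emb q).
Proof.
elim: P p0 => [//|a P IH] p0 _; case: P IH => [|b P] IH.
  by exists a; rewrite ?mem_head // => q; rewrite inE => /eqP->; left.
have [p pP pmin] := IH b (mem_head _ _).
case: (lexle_total (emb a) (emb p)) => le.
  exists a; rewrite ?mem_head // => q; rewrite inE => /orP[/eqP->|/pmin]; first by left.
  exact: lexle_trans.
exists p; first by rewrite inE pP orbT.
by move=> q; rewrite inE => /orP[/eqP->//|/pmin].
Qed.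

Lemma lexmin_ex S s : S s ->
  exists c, S c /\ forall c', S c' -> lexle (emb c) (emb c').
Proof.
move=> Ss; have [P [PS Pc]] := dickson S.
have [p0 p0P _] := Pc s Ss.
have [c cP cmin] := lexmin_seq p0P.
exists c; split; first exact: PS.
move=> c' /Pc [p pP le]; apply: lexle_trans (cmin p pP) _.
exact/le_lexle/emb_le.
Qed.

End Dickson.

Section Series.
Variables (K : fieldType) (m : nat).
Implicit Types (f g : series K m) (a b c : mon m) (x y : vec m).

Lemma mem_mon_divs c a : (a \in mon_divs c) = [forall i, a i <= c i]%N.
Proof.
rewrite mem_filter; apply/andP/idP => [[]//|H]; split=> //.
have lt i : (a i < mon_bnd c)%N.
  by rewrite ltnS; apply: leq_trans (forallP H i) _; exact: leq_bigmax.
apply/mapP; exists [ffun i => Ordinal (lt i)]; first by rewrite mem_enum.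
by apply/ffunP => i; rewrite !ffunE.
Qed.

Lemma uniq_mon_divs c : uniq (mon_divs c).
Proof.
apply: filter_uniq; rewrite map_inj_uniq ?enum_uniq // => b1 b2 /ffunP H.
by apply/ffunP => i; apply: val_inj; have := H i; rewrite !ffunE.
Qed.

Definition mon_add a b : mon m := [ffun i => (a i + b i)%N].

Definition msum (A B : mon m -> Prop) : mon m -> Prop :=
  fun v => exists a b, A a /\ B b /\ v = mon_add a b.

Lemma emb_mon_add a b : emb (mon_add a b) = vadd (emb a) (emb b).
Proof. by apply: functional_extensionality => i; rewrite /emb /vadd ffunE natrD. Qed.

Lemma mon_add_sub a c : a \in mon_divs c -> mon_add a (mon_sub c a) = c.
Proof. by rewrite mem_mon_divs => /forallP H; apply/ffunP => i; rewrite !ffunE subnKC. Qed.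

Lemma supp_mul f g c : supp (ser_mul f g) c -> msum (supp f) (supp g) c.
Proof.
rewrite /supp /ser_mul => H.
have [a [ain Ha]] : exists a, a \in mon_divs c /\ f a * g (mon_sub c a) != 0.
  apply: NNPP => Hn; move/eqP: H; apply; apply: big1_seq => a /andP[_ ain].
  by apply/eqP; apply: contraT => ne; case: Hn; exists a.
move: Ha; rewrite mulf_eq0 negb_or => /andP[fa ga].
by exists a, (mon_sub c a); split=> //; split=> //; rewrite mon_add_sub.
Qed.

Lemma ser_mul_unique_coef f g a b :
  (forall a' b', f a' != 0 -> g b' != 0 -> mon_add a' b' = mon_add a b -> a' = a) ->
  ser_mul f g (mon_add a b) = f a * g b.
Proof.
move=> Huniq; rewrite /ser_mul (bigD1_seq a) ?uniq_mon_divs //; last first.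
  by rewrite mem_mon_divs; apply/forallP => i; rewrite ffunE leq_addr.
have -> : mon_sub (mon_add a b) a = b by apply/ffunP => i; rewrite !ffunE addKn.
rewrite big1_seq ?Monoid.mulm1 // => a' /andP[ne ain]; apply/eqP; apply: contraT.
rewrite mulf_eq0 negb_or => /andP[fa ga].
by rewrite (Huniq _ _ fa ga) ?eqxx ?mon_add_sub in ne.
Qed.

Definition lex_lb f x := forall c, supp f c -> lexle x (emb c).

Lemma lex_lb_mul f g x y : lex_lb f x -> lex_lb g y -> lex_lb (ser_mul f g) (vadd x y).
Proof.
move=> hf hg c /supp_mul [a [b [fa [gb ->]]]]; rewrite emb_mon_add.
by apply: lexle_add; [apply: hf|apply: hg].
Qed.

Lemma lex_lb_add f g x : lex_lb f x -> lex_lb g x -> lex_lb (ser_add f g) x.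
Proof.
move=> hf hg c; rewrite /supp /ser_add => H.
case: (eqVneq (f c) 0) => [f0|fc]; last exact: hf.
by apply: hg; rewrite /supp; move: H; rewrite f0 add0r.
Qed.

(* For f = 0 this is an unspecified exponent. *)
Definition lm f : mon m := epsilon (inhabits [ffun=> 0%N])
  (fun c => supp f c /\ lex_lb f (emb c)).

Lemma lm_spec f : ser_nonzero f -> supp f (lm f) /\ lex_lb f (emb (lm f)).
Proof. by move=> [c fc]; apply: (epsilon_spec _ _ (lexmin_ex fc)). Qed.

Lemma ser_mul_lm_coef f g : ser_nonzero f -> ser_nonzero g ->
  ser_mul f g (mon_add (lm f) (lm g)) = f (lm f) * g (lm g).
Proof.
move=> nf ng; have [sf lf] := lm_spec nf; have [sg lg] := lm_spec ng.
apply: ser_mul_unique_coef => a' b' fa gb E.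
case: (lf a' fa) => [/emb_inj//|lt]; exfalso.
apply: (@lexlt_irr m (emb (mon_add (lm f) (lm g)))).
by rewrite -{2}E !emb_mon_add; apply: lexlt_add => //; exact: lg.
Qed.

Lemma ser_mul_nonzero f g :
  ser_nonzero f -> ser_nonzero g -> ser_nonzero (ser_mul f g).
Proof.
move=> nf ng; exists (mon_add (lm f) (lm g)); rewrite ser_mul_lm_coef //.
by rewrite mulf_neq0 //; [apply: (proj1 (lm_spec nf))|apply: (proj1 (lm_spec ng))].
Qed.

Lemma lm_mul f g : ser_nonzero f -> ser_nonzero g ->
  lm (ser_mul f g) = mon_add (lm f) (lm g).
Proof.
move=> nf ng; have [sfg lfg] := lm_spec (ser_mul_nonzero nf ng).
apply: emb_inj; apply: lexle_anti.
  apply: lfg; rewrite /supp ser_mul_lm_coef // mulf_neq0 //.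
    exact: (proj1 (lm_spec nf)).
  exact: (proj1 (lm_spec ng)).
rewrite emb_mon_add; apply: lex_lb_mul sfg.
  exact: (proj2 (lm_spec nf)).
exact: (proj2 (lm_spec ng)).
Qed.

End Series.

Section NewtonPolyhedron.
Variable m : nat.
Implicit Types (S A B : mon m -> Prop) (x y z : vec m) (s t : R).

(* [snp S s x]: x lies in s * conv(S) + R^m_{>=0}; weighted lists concatenate
   more easily than the ordinal-indexed families of [in_newton]. *)
Definition snp S s x := exists l : seq (R * mon m),
  (forall q, q \in l -> S q.2 /\ 0 <= q.1) /\ \sum_(q <- l) q.1 = s /\
  forall i, \sum_(q <- l) q.1 * (q.2 i)%:R <= x i.

Lemma in_newtonE S x : in_newton S x <-> snp S 1 x.
Proof.
split.
  move=> [n [lam [pts [Hs [Hl [H1 H2]]]]]].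
  exists [seq (lam k, pts k) | k <- enum 'I_n]; split; last split.
  - by move=> q /mapP [k _ ->]; split; [apply: Hs|apply: Hl].
  - by rewrite big_map big_enum.
  - by move=> i; rewrite big_map big_enum.
move=> [l [Hl [H1 H2]]]; pose d := (0 : R, [ffun=> 0%N] : mon m).
exists (size l), (fun k => (nth d l k).1), (fun k => (nth d l k).2).
split; last split; last split.
- by move=> k; apply: (proj1 (Hl _ (mem_nth d (ltn_ord k)))).
- by move=> k; apply: (proj2 (Hl _ (mem_nth d (ltn_ord k)))).
- by move: H1; rewrite (big_nth d) big_mkord.
- by move=> i; move: (H2 i); rewrite (big_nth d) big_mkord.
Qed.

Lemma snp_single S p : S p -> snp S 1 (emb p).
Proof.
move=> Sp; exists [:: (1, p)]; split; last split.
- by move=> q; rewrite inE => /eqP ->.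
- by rewrite big_seq1.
- by move=> i; rewrite big_seq1 mul1r.
Qed.

Lemma snp_zero S : snp S 0 (fun _ => 0).
Proof. by exists [::]; split; last split; [|rewrite big_nil|move=> i; rewrite big_nil]. Qed.

Lemma snp_mono S s x y : snp S s x -> (forall i, x i <= y i) -> snp S s y.
Proof.
move=> [l [Hl [H1 H2]]] le; exists l; split=> //; split=> // i.
exact: le_trans (H2 i) (le i).
Qed.

Lemma snp_sub S A s x : (forall p, S p -> A p) -> snp S s x -> snp A s x.
Proof.
move=> SA [l [Hl [H1 H2]]]; exists l; split=> //.
by move=> q ql; have [Sq q0] := Hl q ql; split=> //; apply: SA.
Qed.

Lemma snp_add S s t x y : snp S s x -> snp S t y -> snp S (s + t) (vadd x y).
Proof.
move=> [l1 [Hl1 [H11 H21]]] [l2 [Hl2 [H12 H22]]]; exists (l1 ++ l2); split; last split.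
- by move=> q; rewrite mem_cat => /orP[]; [apply: Hl1|apply: Hl2].
- by rewrite big_cat H11 H12.
- by move=> i; rewrite big_cat /vadd; apply: lerD.
Qed.

Lemma snp_scale S a s x : 0 <= a -> snp S s x -> snp S (a * s) (vscale a x).
Proof.
move=> a0 [l [Hl [H1 H2]]]; exists [seq (a * q.1, q.2) | q <- l]; split; last split.
- move=> q /mapP [q' q'l ->] /=; have [Sq q0] := Hl q' q'l.
  by split=> //; exact: mulr_ge0.
- by rewrite big_map -H1 mulr_sumr.
- move=> i; rewrite big_map /vscale.
  under eq_bigr => q _ do rewrite -mulrA.
  by rewrite -mulr_sumr ler_wpM2l.
Qed.

Lemma snp_ge0 S s x : snp S s x -> 0 <= s.
Proof. by move=> [l [Hl [<- _]]]; rewrite big_seq; apply: sumr_ge0 => q /Hl[]. Qed.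

Lemma snp_nonneg S s x : snp S s x -> forall i, 0 <= x i.
Proof.
move=> [l [Hl [_ H2]]] i; apply: le_trans (H2 i); rewrite big_seq.
by apply: sumr_ge0 => q /Hl[_ q0]; apply: mulr_ge0.
Qed.

Lemma snp_convex_comb S (I : eqType) (r : seq I) (pi : I -> R) (y : I -> vec m) :
  (forall k, k \in r -> 0 <= pi k) -> (forall k, k \in r -> snp S 1 (y k)) ->
  snp S (\sum_(k <- r) pi k) (fun i => \sum_(k <- r) pi k * y k i).
Proof.
elim: r => [|k r IH] p0 Hy.
  by rewrite big_nil; apply: snp_mono (snp_zero S) _ => i; rewrite big_nil.
have IHr : snp S (\sum_(k <- r) pi k) (fun i => \sum_(k <- r) pi k * y k i).
  by apply: IH => k' k'r; [apply: p0|apply: Hy]; rewrite inE k'r orbT.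
have := snp_add (snp_scale (p0 k (mem_head _ _)) (Hy k (mem_head _ _))) IHr.
by rewrite mulr1 big_cons => H; apply: snp_mono H _ => i; rewrite /vadd /vscale big_cons.
Qed.

Lemma snp_comp A B s x : (forall p, A p -> snp B 1 (emb p)) -> snp A s x -> snp B s x.
Proof.
move=> HAB [l [Hl [<- H2]]].
have := @snp_convex_comb B _ l fst (fun q => emb q.2) (fun q ql => proj2 (Hl q ql)).
by move=> /(_ (fun q ql => HAB _ (proj1 (Hl q ql)))) H; apply: snp_mono H _ => i; exact: H2.
Qed.

Lemma snp_basis S P s x : mon_basis S P -> snp S s x -> snp [in P] s x.
Proof.
move=> [_ CP]; apply: snp_comp => a Sa; have [p pP le] := CP a Sa.
by apply: snp_mono (snp_single (S := [in P]) pP) _; apply: emb_le.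
Qed.

End NewtonPolyhedron.

Lemma convex_eq_lb (F : realFieldType) (t a b c : F) :
  0 < t -> t < 1 -> c <= a -> c <= b -> c = t * a + (1 - t) * b -> a = b.
Proof.
move=> t0 t1 ca cb E.
have h1 : 0 <= t * (a - c) by apply: mulr_ge0; lra.
have h2 : 0 <= (1 - t) * (b - c) by apply: mulr_ge0; lra.
have e1 : t * (a - c) = 0 by lra.
have e2 : (1 - t) * (b - c) = 0 by lra.
move/eqP: e1; rewrite mulf_eq0 gt_eqF //= subr_eq0 => /eqP ->.
by move/eqP: e2; rewrite mulf_eq0 !subr_eq0 (gt_eqF t1) /= => /eqP ->.
Qed.

Section Vertices.
Variable m : nat.
Implicit Types (S A B : mon m -> Prop) (x y z : vec m).

Definition np_extreme S x := forall y z (t : R), snp S 1 y -> snp S 1 z ->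
  0 < t -> t < 1 -> (forall i, x i = t * y i + (1 - t) * z i) -> forall i, y i = z i.

Lemma is_vertexE S x : is_vertex S x <-> snp S 1 x /\ np_extreme S x.
Proof.
rewrite /is_vertex in_newtonE; split=> [[H1 H2]|[H1 H2]]; split=> //.
  by move=> y z t ny nz; apply: H2; apply/in_newtonE.
by move=> y z t /in_newtonE ny /in_newtonE nz; apply: H2.
Qed.

Lemma vert_np A B : (forall x, snp A 1 x <-> snp B 1 x) -> forall v, vert A v <-> vert B v.
Proof.
move=> E v; rewrite /vert !is_vertexE /np_extreme.
split=> [[H1 H2]|[H1 H2]]; split; try by apply/E.
- by move=> y z t /E ny /E nz; apply: H2.
- by move=> y z t /E ny /E nz; apply: H2.
Qed.

(* Otherwise x could be moved up and down along the i-th axis inside the polyhedron. *)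
Lemma extreme_min S x y : np_extreme S x -> snp S 1 y ->
  (forall i, y i <= x i) -> forall i, y i = x i.
Proof.
move=> Hext ny le i; apply/eqP; rewrite eq_le le /=; apply/negP => /negP.
rewrite -ltNge => lt; pose d := x i - y i.
pose shift (e : R) j := x j + (if j == i then e else 0).
have n_shift e : 0 <= e + d -> snp S 1 (shift e).
  rewrite /d => ed; apply: snp_mono ny _ => j; have lej := le j; rewrite /shift.
  by case: eqP => [->|_]; lra.
have d0 : 0 < d by rewrite /d subr_gt0.
have E : shift (- d) i = shift d i.
  apply: (Hext _ _ (1/2)); [apply: n_shift; lra|apply: n_shift; lra|lra|lra|].
  by move=> j; rewrite /shift; case: eqP => _; lra.
by move: E; rewrite /shift eqxx => E; lra.
Qed.

Lemma extreme_combo S x p w y : np_extreme S x -> S p -> snp S (1 - w) y ->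
  0 < w -> (forall i, x i = w * emb p i + y i) -> x = emb p.
Proof.
move=> Hext Sp ny w0 Ex; have w1 := snp_ge0 ny; have y0 := snp_nonneg ny.
apply: functional_extensionality => i.
have [w_1|wn1] := eqVneq w 1.
  apply/esym; apply: (extreme_min Hext (snp_single Sp)) => j.
  by rewrite Ex w_1; have := y0 j; lra.
have w1' : 1 - w != 0 by rewrite subr_eq0 eq_sym.
have wlt : w < 1 by rewrite lt_neqAle wn1 -subr_ge0.
have nz : snp S 1 (vscale (1 - w)^-1 y).
  by rewrite -[X in snp S X](mulVf w1'); apply: snp_scale => //; rewrite invr_ge0.
have comb j : x j = w * emb p j + (1 - w) * vscale (1 - w)^-1 y j.
  by rewrite Ex /vscale mulrA mulfV ?mul1r.
have yi : (1 - w) * emb p i = y i.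
  by rewrite (Hext _ _ w (snp_single Sp) nz w0 wlt comb i) /vscale mulrA mulfV ?mul1r.
by rewrite Ex -yi; lra.
Qed.

Lemma vert_sub S v : vert S v -> S v.
Proof.
move=> /is_vertexE [[l [Hl [H1 H2]]] Hext].
have tight := extreme_min Hext (ex_intro _ l (conj Hl (conj H1 (fun i => lexx _)))) H2.
have [q ql qpos] : exists2 q, q \in l & 0 < q.1.
  apply: NNPP => Hn; suff : \sum_(q <- l) q.1 <= 0 by rewrite H1 ler10.
  rewrite big_seq; apply: sumr_le0 => q ql; rewrite leNgt; apply/negP => qp.
  by apply: Hn; exists q.
have [Sq _] := Hl q ql.
have mass : q.1 + \sum_(q' <- rem q l) q'.1 = 1.
  by rewrite -H1 (perm_big _ (perm_to_rem ql)) big_cons.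
have split_l i : \sum_(q' <- l) q'.1 * (q'.2 i)%:R =
    q.1 * (q.2 i)%:R + \sum_(q' <- rem q l) q'.1 * (q'.2 i)%:R.
  by rewrite (perm_big _ (perm_to_rem ql)) big_cons.
suff -> : v = q.2 by [].
apply/emb_inj/(extreme_combo Hext Sq (w := q.1)
  (y := fun i => \sum_(q' <- rem q l) q'.1 * (q'.2 i)%:R)).
- exists (rem q l); split; first by move=> q' /mem_rem; apply: Hl.
  by split=> [|i //]; move: mass; lra.
- exact: qpos.
- by move=> i; rewrite -tight split_l.
Qed.

Lemma snp_split S p y : snp S 1 y -> exists e Ny, [/\ 0 <= e,
  snp (fun a => S a /\ a != p) (1 - e) Ny & forall j, e * emb p j + Ny j <= y j].
Proof.
move=> [l [Hl [H1 H2]]].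
exists (\sum_(q <- l | q.2 == p) q.1), (fun j => \sum_(q <- l | q.2 != p) q.1 * (q.2 j)%:R).
split.
- by rewrite big_seq_cond; apply: sumr_ge0 => q /andP[/Hl[]].
- exists [seq q <- l | q.2 != p]; split; last split.
  + by move=> q; rewrite mem_filter => /andP[nq /Hl[]].
  + by rewrite big_filter; move: H1; rewrite (bigID (fun q => q.2 == p)) /= => H1; lra.
  + by move=> j; rewrite big_filter.
- move=> j; apply: le_trans (H2 j).
  rewrite [X in _ <= X](bigID (fun q => q.2 == p)) /= mulr_suml lerD2r.
  by apply: ler_sum => q /eqP->; exact: lexx.
Qed.

(* If p = t y + (1 - t) z with y != z, the mass of y and z carried by p is < 1,
   and the rest, rescaled, exhibits p in the polyhedron of P \ {p}. *)
Lemma np_remove_nonvertex S (P : seq (mon m)) p :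
  (forall y, snp S 1 y -> snp [in P] 1 y) -> S p -> ~ vert S p ->
  snp (fun a => a \in P /\ a != p) 1 (emb p).
Proof.
move=> SP Sp npv; apply: NNPP => Hn; apply: npv; apply/is_vertexE.
split=> [|y z t ny nz t0 t1 E i]; first exact: snp_single.
apply: NNPP => neq; apply: Hn.
have [ey [Ny [ey0 nNy Ey]]] := snp_split p (SP _ ny).
have [ez [Nz [ez0 nNz Ez]]] := snp_split p (SP _ nz).
have ey1 := snp_ge0 nNy; have ez1 := snp_ge0 nNz.
have Ny0 := snp_nonneg nNy; have Nz0 := snp_nonneg nNz.
have t1' : 0 < 1 - t by rewrite subr_gt0.
pose W := t * (1 - ey) + (1 - t) * (1 - ez).
have [W0|Wpos] : W = 0 \/ 0 < W.
  by have := mulr_ge0 (ltW t0) ey1; have := mulr_ge0 (ltW t1') ez1; rewrite /W; lra.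
  have ab := convex_eq_lb t0 t1 ey1 ez1 (esym W0).
  have ey_1 : ey = 1 by move: W0; rewrite /W -ab; lra.
  have ez_1 : ez = 1 by move: ab; rewrite ey_1; lra.
  exfalso; apply: neq; apply: (convex_eq_lb t0 t1 (c := emb p i)); last exact: E.
  - by have := Ey i; have := Ny0 i; rewrite ey_1; lra.
  - by have := Ez i; have := Nz0 i; rewrite ez_1; lra.
have Wi : 0 <= W^-1 by rewrite invr_ge0 ltW.
have N := snp_scale Wi
  (snp_add (snp_scale (ltW t0) nNy) (snp_scale (ltW t1') nNz)).
rewrite -/W mulVf ?gt_eqF // in N; apply: snp_mono N _ => j.
rewrite /vscale /vadd ler_pdivrMl //.
have k1 := ler_wpM2l (ltW t0) (Ey j).
have k2 := ler_wpM2l (ltW t1') (Ez j).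
by have := E j; rewrite /W; lra.
Qed.

Lemma snp_vert S x : snp S 1 x -> snp (vert S) 1 x.
Proof.
have [P0 BP0] := dickson S.
suff H : forall n (P : seq (mon m)), (size P <= n)%N -> (forall a, a \in P -> S a) ->
    (forall y, snp S 1 y -> snp [in P] 1 y) -> snp [in P] 1 x -> snp (vert S) 1 x.
  move=> nx; apply: (H _ P0 (leqnn _) (proj1 BP0)); last exact: snp_basis BP0 nx.
  by move=> y; apply: snp_basis BP0.
elim=> [|n IH] P sP PS SP nx.
  by apply: snp_sub nx => a; move: sP; rewrite leqn0 => /nilP ->.
case: (classic (exists2 p, p \in P & ~ vert S p)) => [[p pP npv]|allv]; last first.
  by apply: snp_sub nx => a aP; apply: NNPP => na; apply: allv; exists a.
have Hp := np_remove_nonvertex SP (PS p pP) npv.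
pose P' := [seq a <- P | a != p].
have PP' y : snp [in P] 1 y -> snp [in P'] 1 y.
  apply: snp_comp => a aP; have [->|ne] := eqVneq a p.
    by apply: snp_sub Hp => b [bP bp]; rewrite mem_filter bp.
  by apply: snp_single; rewrite mem_filter ne.
apply: (IH P') => [|a|y ny|]; last exact: PP'.
- rewrite size_filter -ltnS; apply: leq_trans sP.
  rewrite -(count_predC (predC1 p) P) -{1}[count _ _]addn0 ltn_add2l -has_count.
  by apply/hasP; exists p => //=; rewrite eqxx.
- by rewrite mem_filter => /andP[_]; apply: PS.
- exact/PP'/SP.
Qed.

Lemma np_vert S x : snp (vert S) 1 x <-> snp S 1 x.
Proof. by split; [apply: snp_sub => v; apply: vert_sub|apply: snp_vert]. Qed.

End Vertices.

Section MinkowskiSum.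
Variable m : nat.
Implicit Types (A B : mon m -> Prop) (x y z : vec m).

Lemma snp_translate A B a y : A a -> snp B 1 y -> snp (msum A B) 1 (vadd (emb a) y).
Proof.
move=> Aa [l [Hl [H1 H2]]]; exists [seq (q.1, mon_add a q.2) | q <- l]; split; last split.
- move=> q /mapP [q' q'l ->] /=; have [Bq q0] := Hl q' q'l.
  by split=> //; exists a, q'.2.
- by rewrite big_map.
- move=> i; rewrite big_map /vadd.
  under eq_bigr => q _ do rewrite /= ffunE natrD mulrDr.
  by rewrite big_split /= -mulr_suml H1 mul1r lerD2l.
Qed.

Lemma snp_msum A B x y : snp A 1 x -> snp B 1 y -> snp (msum A B) 1 (vadd x y).
Proof.
move=> [l [Hl [H1 H2]]] ny.
have := @snp_convex_comb _ (msum A B) _ l fst (fun q => vadd (emb q.2) y)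
  (fun q ql => proj2 (Hl q ql)) (fun q ql => snp_translate (proj1 (Hl q ql)) ny).
rewrite H1 => N; apply: snp_mono N _ => i; rewrite /vadd.
rewrite (eq_bigr (fun q => q.1 * emb q.2 i + q.1 * y i)) => [|q _]; last by rewrite mulrDr.
by rewrite big_split /= -mulr_suml H1 mul1r lerD2r; exact: H2.
Qed.

Lemma snp_msum_decomp A B s z : snp (msum A B) s z ->
  exists za zb, [/\ snp A s za, snp B s zb & forall i, za i + zb i <= z i].
Proof.
move=> [l [Hl [<- H2]]].
suff [za [zb [na nb E]]] : exists za zb, [/\ snp A (\sum_(q <- l) q.1) za,
    snp B (\sum_(q <- l) q.1) zb & forall i, za i + zb i = \sum_(q <- l) q.1 * (q.2 i)%:R].
  by exists za, zb; split=> // i; rewrite E.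
elim: l Hl {H2} => [|q l IH] Hl.
  exists (fun _ => 0), (fun _ => 0); rewrite big_nil; split; try exact: snp_zero.
  by move=> i; rewrite big_nil addr0.
have [[a [b [Aa [Bb qe]]]] q0] := Hl q (mem_head _ _).
have [za [zb [na nb E]]] : exists za zb, [/\ snp A (\sum_(q <- l) q.1) za,
    snp B (\sum_(q <- l) q.1) zb & forall i, za i + zb i = \sum_(q <- l) q.1 * (q.2 i)%:R].
  by apply: IH => q' h; apply: Hl; rewrite inE h orbT.
exists (vadd (vscale q.1 (emb a)) za), (vadd (vscale q.1 (emb b)) zb); rewrite big_cons.
split; [have := snp_add (snp_scale q0 (snp_single Aa)) na
       |have := snp_add (snp_scale q0 (snp_single Bb)) nb|]; rewrite ?mulr1 //.
by move=> i; rewrite big_cons -E qe /vadd /vscale /emb ffunE natrD; lra.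
Qed.

(* The midpoint of a + b' and a' + b is the vertex a + b = a' + b'. *)
Lemma vert_msum_unique A B v a b a' b' : vert (msum A B) v ->
  A a -> B b -> A a' -> B b' -> v = mon_add a b -> v = mon_add a' b' -> a = a'.
Proof.
move=> /is_vertexE [_ Hext] Aa Bb Aa' Bb' e1 e2.
have H1 : snp (msum A B) 1 (emb (mon_add a b')) by apply: snp_single; exists a, b'.
have H2 : snp (msum A B) 1 (emb (mon_add a' b)) by apply: snp_single; exists a', b.
have Ei i : (a i + b i = v i /\ a' i + b' i = v i)%N.
  by split; [rewrite e1|rewrite e2]; rewrite ffunE.
have E i : emb v i = 1/2 * emb (mon_add a b') i + (1 - 1/2) * emb (mon_add a' b) i.
  have [/(congr1 (GRing.natmul (1 : R))) h1 /(congr1 (GRing.natmul (1 : R))) h2] := Ei i.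
  by move: h1 h2; rewrite /emb !ffunE !natrD; lra.
have half0 : 0 < 1/2 :> R by lra.
have half1 : 1/2 < 1 :> R by lra.
have H' := Hext _ _ (1/2) H1 H2 half0 half1 E.
apply/ffunP => i; have [h1 h2] := Ei i; move/eqP: (H' i); rewrite /emb !ffunE eqr_nat.
move/eqP => h3; move: h1 h2 h3.
(* Generalized so that lia sees syntactically identical atoms. *)
move: (a i) (b i) (a' i) (b' i) (v i) => ai bi ai' bi' vi; lia.
Qed.

End MinkowskiSum.

Section TropicalOrder.
Variable m : nat.
Implicit Types (A B F G : mon m -> Prop).

Lemma vert_seteq A B : (forall v, A v <-> B v) -> forall v, vert A v <-> vert B v.
Proof. by move=> H; apply: vert_np => x; split; apply: snp_sub => v; apply H. Qed.

Lemma vert_vert A v : vert (vert A) v <-> vert A v.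
Proof. exact: vert_np (@np_vert m A) v. Qed.

Lemma vb_mul_one A v : vb_mul A (vb_one m) v <-> vert A v.
Proof.
apply: vert_seteq => w; split=> [[x [y [Ax [y0 e]]]]|Aw].
  by have -> : w = x by apply/ffunP => i; rewrite e y0 addn0.
by exists w, [ffun=> 0%N]; split=> //; split=> i; rewrite ?ffunE ?addn0.
Qed.

Lemma vert_eqE A B :
  (forall v, vert A v <-> vert B v) <-> (forall x, snp A 1 x <-> snp B 1 x).
Proof.
split=> [E x|H v]; last exact: vert_np H v.
rewrite -(np_vert A) -(np_vert B); split; apply: snp_sub => v; apply E.
Qed.

Lemma np_union_eqE F G : (forall x, snp (fun v => F v \/ G v) 1 x <-> snp G 1 x) <->
  (forall c, F c -> snp G 1 (emb c)).
Proof.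
split=> [E c Fc|H x]; first by apply/E/snp_single; left.
split; last by apply: snp_sub => v; right.
by apply: snp_comp => w [/H //|]; apply: snp_single.
Qed.

Lemma vb_le_one F G : vb_le (vert F) (vert G) (vb_one m) (vb_one m) <->
  forall c, F c -> snp G 1 (emb c).
Proof.
rewrite /vb_le /seteq /vb_add -np_union_eqE -vert_eqE.
have unionE : forall v,
    vert (fun v => vb_mul (vert F) (vb_one m) v \/ vb_mul (vert G) (vb_one m) v) v
    <-> vert (fun v => F v \/ G v) v.
  move=> v; rewrite (vert_seteq (B := fun v => vert F v \/ vert G v)); last first.
    by move=> w; rewrite !vb_mul_one !vert_vert.
  move: v; apply/vert_eqE => x; split.
    by apply: snp_sub => w [] /vert_sub; [left|right].
  apply: snp_comp => w [Fw|Gw].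
    by apply: snp_sub (snp_vert (snp_single Fw)) => u; left.
  by apply: snp_sub (snp_vert (snp_single Gw)) => u; right.
have GE v : vb_mul (vert G) (vb_one m) v <-> vert G v by rewrite vb_mul_one vert_vert.
by split=> E v; [rewrite -unionE E GE|rewrite unionE GE E].
Qed.

End TropicalOrder.

Section SeriesNewton.
Variables (K : fieldType) (m : nat).
Implicit Types (f g h : series K m).

Lemma vert_msum_supp f g v : vert (msum (supp f) (supp g)) v -> supp (ser_mul f g) v.
Proof.
move=> vv; have [a [b [fa [gb e]]]] := vert_sub vv.
rewrite /supp e ser_mul_unique_coef ?mulf_neq0 // => a' b' fa' gb' e'.
by apply/esym; apply: (vert_msum_unique vv fa gb fa' gb' e); rewrite e.
Qed.

Lemma np_supp_mul f g x :
  snp (supp (ser_mul f g)) 1 x <-> snp (msum (supp f) (supp g)) 1 x.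
Proof.
split; first by apply: snp_sub => v; apply: supp_mul.
by move=> /snp_vert; apply: snp_sub => v; apply: vert_msum_supp.
Qed.

Definition supp_in_np f g := forall c, supp f c -> snp (supp g) 1 (emb c).

Lemma in_circE (q : Defs.frac K m) : in_circ q <-> frac_wf q /\ supp_in_np q.1 q.2.
Proof. by rewrite /in_circ /trop vb_le_one. Qed.

Lemma supp_in_np_refl f : supp_in_np f f.
Proof. by move=> c fc; apply: snp_single. Qed.

Lemma supp_in_np_mul f1 g1 f2 g2 : supp_in_np f1 g1 -> supp_in_np f2 g2 ->
  supp_in_np (ser_mul f1 f2) (ser_mul g1 g2).
Proof.
move=> h1 h2 c /supp_mul [a [b [fa [fb ->]]]]; apply/np_supp_mul.
by rewrite emb_mon_add; apply: snp_msum; [apply: h1|apply: h2].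
Qed.

Lemma supp_in_np_mulC f g h : supp_in_np f (ser_mul g h) -> supp_in_np f (ser_mul h g).
Proof.
move=> H c /H /np_supp_mul N; apply/np_supp_mul; apply: snp_sub N.
move=> v [a [b [ga [hb ->]]]]; exists b, a; split=> //; split=> //.
by apply/ffunP => i; rewrite !ffunE addnC.
Qed.

Lemma supp_in_np_add f1 g1 f2 g2 : supp_in_np f1 g1 -> supp_in_np f2 g2 ->
  supp_in_np (ser_add (ser_mul f1 g2) (ser_mul f2 g1)) (ser_mul g1 g2).
Proof.
move=> h1 h2 c; rewrite /supp /ser_add.
have [e|ne] := eqVneq (ser_mul f1 g2 c) 0; last first.
  by move=> _; exact: (supp_in_np_mul h1 (@supp_in_np_refl g2) ne).
rewrite e add0r => H.
exact: (supp_in_np_mulC (supp_in_np_mul h2 (@supp_in_np_refl g1)) H).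
Qed.

End SeriesNewton.

Section Stationary.
Variables (F : realFieldType) (n : nat) (M : 'I_n -> 'I_n -> F).
Hypotheses (M0 : forall i j, 0 <= M i j) (M1 : forall i, \sum_j M i j = 1).

(* The all-ones column is in the kernel of M - 1, hence so is some nonzero row. *)
Lemma stochastic_fixed_row : (0 < n)%N ->
  exists2 u : 'rV[F]_n, u != 0 & forall j, \sum_i u 0 i * M i j = u 0 j.
Proof.
move=> n0; pose A : 'M[F]_n := \matrix_(i, j) (M i j - (i == j)%:R).
have /det0P [u u0 uA] : \det A == 0.
  rewrite -det_tr; apply/det0P; exists (const_mx 1).
    by apply/eqP => /matrixP /(_ 0 (Ordinal n0)) /eqP; rewrite !mxE oner_eq0.
  apply/matrixP => i j; rewrite !mxE.
  under eq_bigr => k _ do rewrite !mxE mul1r.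
  rewrite sumrB M1 (bigD1 j) //= eqxx big1 ?addr0 ?subrr // => k.
  by rewrite eq_sym => /negbTE ->.
exists u => // j; have := congr1 (fun B : 'rV_n => B 0 j) uA; rewrite !mxE.
under eq_bigr => i _ do rewrite !mxE mulrBr.
rewrite sumrB.
have -> : \sum_i u 0 i * (i == j)%:R = u 0 j.
  by rewrite (bigD1 j) //= eqxx mulr1 big1 ?addr0 // => i /negbTE->; rewrite mulr0.
by move/eqP; rewrite subr_eq0 => /eqP.
Qed.

(* |u| is subinvariant by the triangle inequality and has the same total mass
   as its image, so it is invariant. *)
Lemma stochastic_fixed_abs (u : 'I_n -> F) :
  (forall j, \sum_i u i * M i j = u j) -> forall j, \sum_i `|u i| * M i j = `|u j|.
Proof.
move=> Hu.
have ale j : `|u j| <= \sum_i `|u i| * M i j.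
  rewrite -Hu; apply: le_trans (ler_norm_sum _ _ _) _.
  by apply: ler_sum => i _; rewrite normrM (ger0_norm (M0 i j)).
have mass : \sum_j (\sum_i `|u i| * M i j - `|u j|) = 0.
  rewrite sumrB exchange_big /=; apply/eqP; rewrite subr_eq0; apply/eqP/eq_bigr => i _.
  by rewrite -mulr_sumr M1 mulr1.
move=> j; apply/eqP; rewrite -subr_eq0; apply/eqP.
by apply: (psumr_eq0P _ mass) => // k _; rewrite subr_ge0.
Qed.

Lemma stationary_distribution : (0 < n)%N ->
  exists pi : 'I_n -> F, [/\ forall i, 0 <= pi i, \sum_i pi i = 1 &
    forall j, \sum_i pi i * M i j = pi j].
Proof.
move=> n0; have [u u0 Hu] := stochastic_fixed_row n0.
have Ha := stochastic_fixed_abs Hu; pose a i := `|u 0 i|.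
have a0 i : 0 <= a i := normr_ge0 _.
have Spos : 0 < \sum_i a i.
  rewrite lt_neqAle sumr_ge0 // andbT eq_sym; apply/negP => /eqP S0.
  apply/negP: u0; rewrite negbK; apply/eqP/matrixP => i j; rewrite ord1 mxE.
  by apply/eqP; rewrite -normr_eq0; apply/eqP; apply: (psumr_eq0P _ S0).
exists (fun i => a i / \sum_i a i); split.
- by move=> i; rewrite divr_ge0 // ltW.
- by rewrite -mulr_suml mulfV // gt_eqF.
- by move=> j; rewrite /a -(Ha j) mulr_suml; apply: eq_bigr => i _; rewrite mulrAC.
Qed.

End Stationary.

Section Cancellation.
Variable m : nat.
Implicit Types (A B Y : mon m -> Prop) (x z : vec m).

Lemma snp_seq_weights (P : seq (mon m)) (d : mon m) s z : snp [in P] s z ->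
  exists mu : 'I_(size P) -> R, [/\ forall j, 0 <= mu j, \sum_j mu j = s &
    forall c, \sum_j mu j * ((nth d P j) c)%:R <= z c].
Proof.
move=> [l [Hl [<- H2]]].
suff [mu [mu0 mu1 mu2]] : exists mu : 'I_(size P) -> R, [/\ forall j, 0 <= mu j,
    \sum_j mu j = \sum_(q <- l) q.1 &
    forall c, \sum_j mu j * ((nth d P j) c)%:R = \sum_(q <- l) q.1 * (q.2 c)%:R].
  by exists mu; split=> // c; rewrite mu2.
elim: l Hl {H2} => [|q l IH] Hl.
  exists (fun _ => 0); split=> //; first by rewrite big_nil big1.
  by move=> c; rewrite big_nil big1 // => j _; rewrite mul0r.
have [qP q0] := Hl q (mem_head _ _).
have [mu [mu0 mu1 mu2]] : exists mu : 'I_(size P) -> R, [/\ forall j, 0 <= mu j,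
    \sum_j mu j = \sum_(q <- l) q.1 &
    forall c, \sum_j mu j * ((nth d P j) c)%:R = \sum_(q <- l) q.1 * (q.2 c)%:R].
  by apply: IH => q' h; apply: Hl; rewrite inE h orbT.
have kP : (index q.2 P < size P)%N by rewrite index_mem.
pose k := Ordinal kP.
have delta (G : 'I_(size P) -> R) : \sum_j (if j == k then G j else 0) = G k.
  by rewrite (bigD1 k) //= eqxx big1 ?addr0 // => j /negbTE ->.
exists (fun j => mu j + (if j == k then q.1 else 0)); split.
- by move=> j; rewrite addr_ge0 //; case: (j == k).
- by rewrite big_split /= (delta (fun=> q.1)) big_cons mu1 addrC.
- move=> c; rewrite big_cons -mu2.
  under eq_bigr => j _ do rewrite mulrDl.
  rewrite big_split /= addrC; congr (_ + _).
  have -> : q.2 = nth d P k by rewrite /= nth_index.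
  rewrite -(delta (fun j => q.1 * ((nth d P j) c)%:R)).
  by apply: eq_bigr => j _; case: (j == k); rewrite ?mul0r.
Qed.

(* Cancellation of a polytope in Minkowski sums: writing x + b_i >= sum_j M_ij b_j + y_i,
   averaging against a stationary distribution of the stochastic matrix M
   cancels the b's. *)
Lemma snp_msum_cancel (P : seq (mon m)) Y x : P != [::] ->
  (forall b, b \in P -> snp (msum [in P] Y) 1 (vadd x (emb b))) -> snp Y 1 x.
Proof.
move=> P0 HP; pose d : mon m := [ffun=> 0%N].
pose b j c : R := ((nth d P j) c)%:R.
have step (i : 'I_(size P)) : exists my : ('I_(size P) -> R) * vec m,
    [/\ forall j, 0 <= my.1 j, \sum_j my.1 j = 1, snp Y 1 my.2 &
        forall c, \sum_j my.1 j * b j c + my.2 c <= x c + b i c].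
  have [za [zb [na nb le]]] := snp_msum_decomp (HP _ (mem_nth d (ltn_ord i))).
  have [mu [mu0 mu1 mu2]] := snp_seq_weights d na.
  by exists (mu, zb); split=> // c /=; apply: le_trans (lerD (mu2 c) (lexx _)) (le c).
have [f Hf] := fin_all_exists step.
pose M i j := (f i).1 j.
have [pi [pi0 pi1 piM]] : exists pi : 'I_(size P) -> R, [/\ forall i, 0 <= pi i,
    \sum_i pi i = 1 & forall j, \sum_i pi i * M i j = pi j].
  apply: stationary_distribution => [i j|i|]; rewrite /M; try by case: (Hf i).
  by rewrite lt0n size_eq0.
have Yi i : snp Y 1 (f i).2 by case: (Hf i).
have := @snp_convex_comb m Y _ (index_enum _) pi (fun i => (f i).2)
  (fun i _ => pi0 i) (fun i _ => Yi i).
rewrite pi1 => N; apply: snp_mono N _ => c.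
have key : \sum_i pi i * (\sum_j M i j * b j c + (f i).2 c) <= \sum_i pi i * (x c + b i c).
  apply: ler_sum => i _; apply: ler_wpM2l; first exact: pi0.
  by have [_ _ _] := Hf i; apply.
have e1 : \sum_i pi i * (\sum_j M i j * b j c) = \sum_j pi j * b j c.
  under eq_bigr => i _ do rewrite mulr_sumr.
  rewrite exchange_big /=; apply: eq_bigr => j _.
  by rewrite -piM mulr_suml; apply: eq_bigr => i _; rewrite mulrA.
have e2 : \sum_i pi i * x c = x c by rewrite -mulr_suml pi1 mul1r.
move: key; under eq_bigr => i _ do rewrite mulrDr.
under [X in _ <= X]eq_bigr => i _ do rewrite mulrDr.
by rewrite !big_split /= e1 e2 => key; lra.
Qed.

Lemma snp_msum_np A B Y z : (forall a, A a -> snp B 1 (emb a)) ->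
  snp (msum A Y) 1 z -> snp (msum B Y) 1 z.
Proof.
move=> AB /snp_msum_decomp [za [zb [na nb le]]].
exact: snp_mono (snp_msum (snp_comp AB na) nb) le.
Qed.

End Cancellation.

Lemma supp_in_np_frac_eq (K : fieldType) m (q1 q2 r1 r2 : series K m) :
  ser_nonzero q2 -> supp_in_np q1 q2 ->
  (forall c, ser_mul q1 r2 c = ser_mul r1 q2 c) -> supp_in_np r1 r2.
Proof.
move=> [c0 qc0] Hq E x r1x; have [P [PS Pc]] := dickson (supp q2).
apply: (snp_msum_cancel (P := P)).
  by have [p pP _] := Pc c0 qc0; apply/eqP => P0; rewrite P0 in pP.
move=> b bP; rewrite -emb_mon_add.
apply: (snp_msum_np (A := supp q1)) => [a /Hq|].
  exact: snp_basis (conj PS Pc).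
have Nq : snp (supp (ser_mul r1 q2)) 1 (emb (mon_add x b)).
  by apply/np_supp_mul/snp_single; exists x, b; split=> //; split=> //; apply: PS.
by apply/np_supp_mul; apply: snp_sub Nq => v; rewrite /supp E.
Qed.

Section CircRing.
Variables (K : fieldType) (m : nat).
Implicit Types (q r a : Defs.frac K m).

Lemma ser_one_nonzero : ser_nonzero (ser_one K m).
Proof.
exists [ffun=> 0%N]; rewrite /ser_one; case: forallP => [_|H]; first exact: oner_neq0.
by case: H => i; rewrite ffunE.
Qed.

Lemma in_circ_zero : in_circ (frac_zero K m).
Proof. by apply/in_circE; split=> [|c]; [apply: ser_one_nonzero|rewrite /supp /= eqxx]. Qed.

Lemma in_circ_frac_eq q r : in_circ q -> frac_wf r -> frac_eq q r -> in_circ r.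
Proof.
move=> /in_circE [wq iq] wr E; apply/in_circE; split=> //.
exact: supp_in_np_frac_eq wq iq E.
Qed.

Lemma in_circ_add q r : in_circ q -> in_circ r -> in_circ (frac_add q r).
Proof.
move=> /in_circE [wq iq] /in_circE [wr ir]; apply/in_circE.
by split; [exact: ser_mul_nonzero|exact: supp_in_np_add].
Qed.

Lemma in_circ_mul a q : in_circ a -> in_circ q -> in_circ (frac_mul a q).
Proof.
move=> /in_circE [wa ia] /in_circE [wq iq]; apply/in_circE.
by split; [exact: ser_mul_nonzero|exact: supp_in_np_mul].
Qed.

End CircRing.

Section LexValuation.
Variables (K : fieldType) (m : nat).
Implicit Types (S : mon m -> Prop) (f g : series K m) (q r a : Defs.frac K m) (x : vec m).

Lemma snp_lexle S c s x : (forall p, S p -> lexle c (emb p)) -> snp S s x ->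
  lexle (vscale s c) x.
Proof.
move=> H [l [Hl [<- H2]]]; apply: lexle_trans (le_lexle H2).
elim: l Hl {H2} => [|q l IH] Hl.
  by left; apply: functional_extensionality => i; rewrite /vscale !big_nil mul0r.
have [Sq q0] := Hl q (mem_head _ _).
have IHl : lexle (vscale (\sum_(q <- l) q.1) c) (fun i => \sum_(q <- l) q.1 * (q.2 i)%:R).
  by apply: IH => q' h; apply: Hl; rewrite inE h orbT.
have -> : vscale (\sum_(q' <- q :: l) q'.1) c =
    vadd (vscale q.1 c) (vscale (\sum_(q <- l) q.1) c).
  by apply: functional_extensionality => i; rewrite /vadd /vscale big_cons mulrDl.
have -> : (fun i => \sum_(q' <- q :: l) q'.1 * (q'.2 i)%:R) =
    vadd (vscale q.1 (emb q.2)) (fun i => \sum_(q <- l) q.1 * (q.2 i)%:R).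
  by apply: functional_extensionality => i; rewrite /vadd /vscale big_cons.
by apply: lexle_add => //; apply: lexle_scale => //; apply: H.
Qed.

Lemma supp_in_np_lex_lb f g : ser_nonzero g -> supp_in_np f g -> lex_lb f (emb (lm g)).
Proof.
move=> ng H c fc; have := snp_lexle (proj2 (lm_spec ng)) (H c fc).
suff -> : vscale 1 (emb (lm g)) = emb (lm g) by [].
by apply: functional_extensionality => i; rewrite /vscale mul1r.
Qed.

Lemma lm_ext f g : f =1 g -> lm f = lm g.
Proof. by move=> /functional_extensionality ->. Qed.

Lemma frac_eq_lm q r : frac_wf q -> frac_wf r -> frac_eq q r -> ser_nonzero q.1 ->
  ser_nonzero r.1 /\ mon_add (lm q.1) (lm r.2) = mon_add (lm r.1) (lm q.2).
Proof.
move=> wq wr E nq1.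
have nr1 : ser_nonzero r.1.
  have [c] := ser_mul_nonzero nq1 wr; rewrite E => /supp_mul [a [_ [ra _]]].
  by exists a.
by split=> //; rewrite -!lm_mul //; apply: lm_ext.
Qed.

(* [val_ge q x]: the lexicographic valuation lm q.1 - lm q.2 of q is at least x. *)
Definition val_ge q x := frac_wf q /\ lex_lb q.1 (vadd x (emb (lm q.2))).

Lemma val_ge_frac_eq q r x : frac_wf q -> frac_eq q r -> val_ge r x -> val_ge q x.
Proof.
move=> wq E [wr hr]; split=> // c qc.
have nq1 : ser_nonzero q.1 by exists c.
have [nr1 e] := frac_eq_lm wq wr E nq1.
apply: lexle_trans (proj2 (lm_spec nq1) c qc).
apply: (@lexle_add2r _ _ _ (emb (lm r.2))); rewrite -emb_mon_add e emb_mon_add.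
rewrite !vaddA [vadd (emb (lm q.2)) _]vaddC -vaddA.
by apply: lexle_add; [exact: hr (proj1 (lm_spec nr1))|left].
Qed.

Lemma val_ge_zero x : val_ge (frac_zero K m) x.
Proof. by split=> [|c]; [apply: ser_one_nonzero|rewrite /supp /= eqxx]. Qed.

Lemma val_ge_add q r x : val_ge q x -> val_ge r x -> val_ge (frac_add q r) x.
Proof.
move=> [wq hq] [wr hr]; split; first exact: ser_mul_nonzero.
rewrite /= lm_mul // emb_mon_add -vaddA; apply: lex_lb_add.
  exact: lex_lb_mul hq (proj2 (lm_spec wr)).
rewrite vaddA [vadd (emb (lm q.2)) _]vaddC -vaddA.
exact: lex_lb_mul hr (proj2 (lm_spec wq)).
Qed.

Lemma val_ge_mul a q x : in_circ a -> val_ge q x -> val_ge (frac_mul a q) x.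
Proof.
move=> /in_circE [wa ia] [wq hq]; split; first exact: ser_mul_nonzero.
rewrite /= lm_mul // emb_mon_add -vaddA [vadd x _]vaddC vaddA.
exact: lex_lb_mul (supp_in_np_lex_lb wa ia) hq.
Qed.

Lemma val_ge_span n (coef gens : 'I_n -> Defs.frac K m) x :
  (forall k, in_circ (coef k)) -> (forall k, val_ge (gens k) x) ->
  val_ge (foldr (@frac_add K m) (frac_zero K m)
            [seq frac_mul (coef k) (gens k) | k <- enum 'I_n]) x.
Proof.
move=> Hc Hg; elim: (enum 'I_n) => [|k s IH] /=; first exact: val_ge_zero.
by apply: val_ge_add IH; apply: val_ge_mul.
Qed.

End LexValuation.

Section LexIdeal.
Variables (K : fieldType) (n : nat).
Implicit Types (f g : series K n.+1) (q r : Defs.frac K n.+1).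

Definition first_val_pos q := forall c, supp q.1 c -> (lm q.2 ord0 < c ord0)%N.

Definition lex_ideal q := in_circ q /\ first_val_pos q.

Lemma lm_ord0_le f c : supp f c -> (lm f ord0 <= c ord0)%N.
Proof.
move=> fc; have := lexle_ord0 (proj2 (lm_spec (ex_intro _ c fc)) c fc).
by rewrite /emb ler_nat.
Qed.

Lemma supp_mul_ord0 f g c : supp (ser_mul f g) c ->
  exists a b, [/\ supp f a, supp g b & c ord0 = (a ord0 + b ord0)%N].
Proof. by move=> /supp_mul [a [b [fa [gb ->]]]]; exists a, b; rewrite ffunE. Qed.

Lemma lm_mul_ord0 f g : ser_nonzero f -> ser_nonzero g ->
  lm (ser_mul f g) ord0 = (lm f ord0 + lm g ord0)%N.
Proof. by move=> nf ng; rewrite lm_mul // ffunE. Qed.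

Lemma first_val_posE q : ser_nonzero q.1 ->
  first_val_pos q <-> (lm q.2 ord0 < lm q.1 ord0)%N.
Proof.
move=> nq1; split=> [H|lt c /lm_ord0_le]; first exact/H/(proj1 (lm_spec nq1)).
exact: leq_trans.
Qed.

Lemma first_val_pos_frac_eq q r : frac_wf q -> frac_wf r -> frac_eq q r ->
  first_val_pos q -> first_val_pos r.
Proof.
move=> wq wr E Iq c rc; have nr1 : ser_nonzero r.1 by exists c.
have [nq1 /(congr1 (fun v : mon n.+1 => v ord0))] :=
  frac_eq_lm wr wq (fun c => esym (E c)) nr1.
rewrite !ffunE; move/(first_val_posE nq1): Iq; have := lm_ord0_le rc; lia.
Qed.

Lemma first_val_pos_add q r : frac_wf q -> frac_wf r ->
  first_val_pos q -> first_val_pos r -> first_val_pos (frac_add q r).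
Proof.
move=> wq wr Iq Ir c; rewrite /= lm_mul_ord0 // /supp /ser_add.
have [e|ne] := eqVneq (ser_mul q.1 r.2 c) 0.
  rewrite e add0r => /supp_mul_ord0 [a [b [ra qb ->]]].
  by have := Ir a ra; have := lm_ord0_le qb; lia.
have [a [b [qa rb ->]]] := supp_mul_ord0 ne.
by have := Iq a qa; have := lm_ord0_le rb; lia.
Qed.

Lemma first_val_pos_mul (a : Defs.frac K n.+1) q : in_circ a -> frac_wf q ->
  first_val_pos q -> first_val_pos (frac_mul a q).
Proof.
move=> /in_circE [wa ia] wq Iq c /supp_mul_ord0 [x [y [ax qy ->]]].
have := lexle_ord0 (supp_in_np_lex_lb wa ia ax); rewrite /emb ler_nat.
by rewrite /= lm_mul_ord0 //; have := Iq y qy; lia.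
Qed.

Lemma lex_ideal_is_ideal : is_ideal lex_ideal.
Proof.
split.
- by move=> q [].
- move=> q r [cq Iq] wr E; split; first exact: in_circ_frac_eq cq wr E.
  exact: first_val_pos_frac_eq (proj1 (proj1 (in_circE q) cq)) wr E Iq.
- by split=> [|c]; [exact: in_circ_zero|rewrite /supp /= eqxx].
- move=> q r [cq Iq] [cr Ir]; split; first exact: in_circ_add.
  by apply: first_val_pos_add Iq Ir; [case/in_circE: cq|case/in_circE: cr].
- move=> a q ca [cq Iq]; split; first exact: in_circ_mul.
  by apply: first_val_pos_mul Iq => //; case/in_circE: cq.
Qed.

End LexIdeal.

Section NotFinitelyGenerated.
Variables (K : fieldType) (n : nat).
Implicit Types (q g : Defs.frac K n.+2).

Definition lex_bound (M : nat) : vec n.+2 :=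
  fun i => if i == ord0 then 1 else if i == ord_one n then - M%:R else 0.

Lemma val_ge_lex_ideal g M : lex_ideal g -> (lm g.2 (ord_one n) < M)%N ->
  val_ge g (lex_bound M).
Proof.
move=> [/in_circE [wg _] Ig] lt; split=> // c gc; right.
have h := Ig c gc.
case: (ltngtP (lm g.2 ord0).+1 (c ord0)) => [l|g'|e].
- exists ord0; split=> [j|]; first by rewrite ltn0.
  by rewrite /vadd /lex_bound eqxx /emb addrC natr1 ltr_nat.
- by move: g'; rewrite ltnS leqNgt h.
- exists (ord_one n); split=> [j|].
    rewrite ltnS leqn0 => /eqP j0; have -> : j = ord0 by apply: val_inj.
    by rewrite /vadd /lex_bound eqxx /emb -e addrC natr1.
  rewrite /vadd /lex_bound eqxx /emb /=.
  have : (lm g.2 (ord_one n))%:R < M%:R :> R by rewrite ltr_nat.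
  have : 0 <= (c (ord_one n))%:R :> R by apply: ler0n.
  lra.
Qed.

Definition ser_mon (a : mon n.+2) : series K n.+2 := fun c => (c == a)%:R.

Definition mon_t1 : mon n.+2 := [ffun i => (i == ord0 : nat)].
Definition mon_t2 (N : nat) : mon n.+2 := [ffun i => if i == ord_one n then N else 0%N].

Definition witness N : Defs.frac K n.+2 :=
  (ser_mon mon_t1, ser_add (ser_mon mon_t1) (ser_mon (mon_t2 N))).

Lemma supp_ser_mon a c : supp (ser_mon a) c <-> c = a.
Proof.
rewrite /supp /ser_mon; have [->|ne] := eqVneq c a; first by rewrite oner_neq0.
by rewrite eqxx; split=> // /eqP; rewrite (negbTE ne).
Qed.

Lemma mon_t1_t2 N : mon_t1 != mon_t2 N.
Proof. by apply/eqP => /ffunP /(_ ord0); rewrite !ffunE. Qed.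

Lemma supp_witness_den N c :
  supp (witness N).2 c <-> c = mon_t1 \/ c = mon_t2 N.
Proof.
rewrite /supp /= /ser_add /ser_mon /=; have ne := mon_t1_t2 N.
have [->|n1] := eqVneq c mon_t1.
  by rewrite (negbTE ne) addr0 oner_neq0; split=> // _; left.
have [->|n2] := eqVneq c (mon_t2 N).
  by rewrite add0r oner_neq0; split=> // _; right.
rewrite addr0 eqxx; split=> // -[] e; [by rewrite e eqxx in n1|by rewrite e eqxx in n2].
Qed.

Lemma lm_witness_den N : lm (witness N).2 = mon_t2 N.
Proof.
have t2 : supp (witness N).2 (mon_t2 N) by apply/supp_witness_den; right.
have [/supp_witness_den [->|//] lmin] := lm_spec (ex_intro _ _ t2).
by move: (lexle_ord0 (lmin _ t2)); rewrite /emb !ffunE /= ler_nat.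
Qed.

Lemma lex_ideal_witness N : lex_ideal (witness N).
Proof.
have t1 : supp (witness N).2 mon_t1 by apply/supp_witness_den; left.
split.
  apply/in_circE; split; first by exists mon_t1.
  by move=> c /supp_ser_mon ->; apply: snp_single.
by move=> c /supp_ser_mon ->; rewrite lm_witness_den !ffunE.
Qed.

Lemma witness_not_val_ge M : ~ val_ge (witness M.+1) (lex_bound M).
Proof.
move=> [_ H]; have := H mon_t1 (proj2 (supp_ser_mon _ _) erefl).
rewrite lm_witness_den => /lexle_ord_one.
rewrite /vadd /lex_bound /emb !ffunE /= addr0 => /(_ erefl).
by rewrite -natr1; lra.
Qed.

End NotFinitelyGenerated.

Theorem proposition2p22 (K : fieldType) (m : nat) :
  [pchar K]%R =i pred0 -> (1 < m)%N -> ~ circ_noetherian K m.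
Proof.
move=> _; case: m => [|[|n]] // _ noeth.
have [k [gens [Igens span]]] := noeth _ (lex_ideal_is_ideal K n.+1).
pose M := (\max_(i < k) lm (gens i).2 (ord_one n)).+1.
have [coef [circ_coef E]] := span _ (lex_ideal_witness K n M.+1).
apply: (@witness_not_val_ge K n M).
apply: (val_ge_frac_eq _ E (val_ge_span circ_coef _)).
  by case: (lex_ideal_witness K n M.+1) => /in_circE [].
move=> i; apply: val_ge_lex_ideal (Igens i) _; rewrite ltnS.
exact: (@leq_bigmax _ (fun j => lm (gens j).2 (ord_one n)) i).
Qed.
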